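(* Let $m$ and $e$ be positive integers with $e\mid m$. Then the greatest common divisor of the integers $(l-1)\frac{m}{e(l)}$, as $l$ ranges over the primes dividing $e$, divides $(e-1)\frac{m}{e}$.
   Context: For a positive integer $t$ and a prime $l$, $t(l)$ denotes the largest power of $l$ dividing $t$. *)

From mathcomp Require Import all_boot.
Set Implicit Arguments.
Unset Strict Implicit.
Unset Printing Implicit Defensive.

Definition ppart (t l : nat) : nat := l ^ logn l t.

From mathcomp Require Import all_boot.

(* Fix a prime p and let q be the p-part of the gcd g.  If p divides e, the
   term for l = p shows that q divides m/e, because p - 1 and e/e(p) are prime
   to p.  Otherwise e/e(l) is prime to p for every l, so q / gcd(q, m/e)
   divides every l - 1; as e is a product of powers of such l, it also divides
   e - 1, whence q divides (e - 1) (m/e). *)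

Lemma dvdn_pred_of_primes d e :
  0 < e -> (forall l, l \in primes e -> d %| l - 1) -> d %| e - 1.
Proof.
move=> e_gt0 d_dvd; rewrite -eqn_mod_dvd //; apply/eqP.
rewrite [in LHS](prod_prime_decomp e_gt0) prime_decompE big_map big_seq /=.
elim/big_rec: _ => // l x l_e x_eq1.
have l_pr : prime l by move: l_e; rewrite mem_primes => /andP[].
have l_eq1 : l = 1 %[mod d] by apply/eqP; rewrite eqn_mod_dvd ?prime_gt0 ?d_dvd.
by rewrite -modnMm -modnXm l_eq1 modnXm exp1n modnMm mul1n.
Qed.

Lemma dvdn_divgcdM q a b : 0 < q -> q %| a * b -> q %/ gcdn q b %| a.
Proof.
(* q divides gcd(a q, a b) = a gcd(q, b). *)
move=> q_gt0 q_ab; have r_gt0 : 0 < gcdn q b by rewrite gcdn_gt0 q_gt0.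
rewrite -(dvdn_pmul2r r_gt0) divnK ?dvdn_gcdl // muln_gcdr.
by rewrite dvdn_gcd dvdn_mull.
Qed.

Lemma divn_ppart m e l : e %| m -> m %/ ppart e l = m %/ e * (e %/ e`_l).
Proof. by move=> e_m; rewrite /ppart -p_part muln_divA ?dvdn_part // divnK. Qed.

Section CommonDivisor.

Variables (d e M : nat).
Hypothesis d_dvd : forall l, l \in primes e -> d %| (l - 1) * (M * (e %/ e`_l)).

Lemma partn_dvd_of_prime_dvd p : p \in primes e -> d`_p %| M.
Proof.
move=> p_e; have := p_e; rewrite mem_primes => /and3P[p_pr e_gt0 _].
have p'_pred : p^'.-nat (p - 1).
  by rewrite p'natE // -prime_coprime // subn1 coprimenP ?prime_gt0.
have p'_cofactor : p^'.-nat (e %/ e`_p).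
  by rewrite -{1}(partnC p e_gt0) mulKn ?part_gt0 ?part_pnat.
have := dvdn_trans (dvdn_part p d) (d_dvd p p_e).
rewrite Gauss_dvdr ?(pnat_coprime (part_pnat _ _)) //.
by rewrite Gauss_dvdl // (pnat_coprime (part_pnat _ _)).
Qed.

Lemma partn_dvd_of_prime_ndvd p : 0 < e -> p \notin primes e ->
  d`_p %| (e - 1) * M.
Proof.
move=> e_gt0 p_e; set q := d`_p.
have q_e : coprime q e.
  apply: (pnat_coprime (part_pnat _ _)); apply/pnatP => // l l_pr l_e.
  by apply: contraNneq p_e => <-; rewrite mem_primes l_pr e_gt0.
have q_dvd l : l \in primes e -> q %/ gcdn q M %| l - 1.
  move=> l_e; apply: dvdn_divgcdM; first exact: part_gt0.
  have q_cofactor : coprime q (e %/ e`_l).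
    by rewrite (coprime_dvdr _ q_e) ?dvdn_div ?dvdn_part.
  rewrite -(Gauss_dvdl _ q_cofactor) -mulnA.
  exact: dvdn_trans (dvdn_part p d) (d_dvd l l_e).
rewrite -(divnK (dvdn_gcdl q M)) dvdn_mul ?dvdn_gcdr //.
exact: dvdn_pred_of_primes.
Qed.

Lemma dvdn_pred_mul_of_primes : 1 < e -> 0 < M -> d %| (e - 1) * M.
Proof.
move=> e_gt1 M_gt0; have e_gt0 := ltnW e_gt1.
have d_gt0 : 0 < d.
  have pdiv_e : pdiv e \in primes e.
    by rewrite mem_primes pdiv_prime ?pdiv_dvd ?e_gt0.
  apply: dvdn_gt0 (d_dvd _ pdiv_e).
  rewrite !muln_gt0 subn_gt0 prime_gt1 ?pdiv_prime // M_gt0.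
  by rewrite divn_gt0 ?part_gt0 // dvdn_leq ?dvdn_part.
apply/dvdn_partP => // p _; have [p_e | p_e] := boolP (p \in primes e).
  exact/dvdn_mull/partn_dvd_of_prime_dvd.
exact: partn_dvd_of_prime_ndvd.
Qed.

End CommonDivisor.

Theorem mainTheorem12 (m e : nat) (hm : 0 < m) (he : 0 < e) (hem : e %| m) :
  (\big[gcdn/0]_(l <- primes e) ((l - 1) * (m %/ ppart e l))) %| (e - 1) * (m %/ e).
Proof.
have [-> | e_neq1] := eqVneq e 1; first by rewrite big_nil.
apply: dvdn_pred_mul_of_primes.
- move=> l l_e; rewrite -divn_ppart // (big_rem l l_e) /=; exact: dvdn_gcdl.
- by rewrite ltn_neqAle eq_sym e_neq1 he.
- by rewrite divn_gt0 // dvdn_leq.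
Qed.
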